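(* For every finite simple graph $G$ and every weight function $w:V(G)\to\mathbb{R}$, if $G$ is $w$-well-dominated then $G$ is $w$-well-covered. Equivalently, $WWD(G)$ is a subspace of $WCW(G)$.
   Context: For $w:V(G)\to\mathbb{R}$ and $S\subseteq V(G)$, $w(S)=\sum_{s\in S}w(s)$. A dominating set is a set $S$ with every vertex in $S$ or adjacent to a vertex of $S$; it is minimal if no proper subset is dominating. $G$ is $w$-well-dominated if all minimal dominating sets have the same weight; $G$ is $w$-well-covered if all maximal (by inclusion) independent sets have the same weight. $WWD(G)$ denotes the set of all $w$ for which $G$ is $w$-well-dominated, and $WCW(G)$ the set of all $w$ for which $G$ is $w$-well-covered (both are vector spaces of functions $V(G)\to\mathbb{R}$). *)

From HB Require Import structures.
From mathcomp Require Import all_boot all_order all_algebra.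
Set Implicit Arguments. Unset Strict Implicit. Unset Printing Implicit Defensive.
Import Order.TTheory GRing.Theory Num.Theory.
Local Open Scope ring_scope.

Definition simple_graph (T : finType) (e : rel T) : Prop :=
  symmetric e /\ irreflexive e.

Definition weight (R : numDomainType) (T : finType) (w : T -> R) (S : {set T}) : R :=
  \sum_(s in S) w s.

Definition dominating (T : finType) (e : rel T) (S : {set T}) : bool :=
  [forall v, (v \in S) || [exists u in S, e v u]].

Definition minimal_dominating (T : finType) (e : rel T) (S : {set T}) : bool :=
  minset (dominating e) S.

Definition independent (T : finType) (e : rel T) (S : {set T}) : bool :=
  [forall u in S, forall v in S, ~~ e u v].

Definition maximal_independent (T : finType) (e : rel T) (S : {set T}) : bool :=
  maxset (independent e) S.

Definition w_well_dominated (R : numDomainType) (T : finType) (e : rel T) (w : T -> R) : Prop :=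
  forall S1 S2 : {set T}, minimal_dominating e S1 -> minimal_dominating e S2 ->
    weight w S1 = weight w S2.

Definition w_well_covered (R : numDomainType) (T : finType) (e : rel T) (w : T -> R) : Prop :=
  forall S1 S2 : {set T}, maximal_independent e S1 -> maximal_independent e S2 ->
    weight w S1 = weight w S2.

From HB Require Import structures.
From mathcomp Require Import all_boot all_order all_algebra.

(* A maximal independent set is a minimal dominating set, so any weight that is
   constant on minimal dominating sets is constant on maximal independent ones. *)

Section IndependentDominating.

Variables (T : finType) (e : rel T).

Lemma independentP (S : {set T}) :
  reflect {in S &, forall u v, ~~ e u v} (independent e S).
Proof.
apply: (iffP forall_inP) => [indS u v uS vS | indS u uS].
  by move/forall_inP: (indS u uS); apply.
by apply/forall_inP => v; apply: indS.
Qed.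

(* An independent dominating set is minimal: a vertex of S can only be
   dominated by itself, since none of its neighbours lies in S. *)
Lemma independent_dominating_minimal (S : {set T}) :
  independent e S -> dominating e S -> minimal_dominating e S.
Proof.
move=> /independentP indS domS; apply/minsetP; split => // B domB sBS.
apply/eqP; rewrite eqEsubset sBS; apply/subsetP => v vS.
have /orP[// | /exists_inP[u uB evu]] := forallP domB v.
by have := indS v u vS (subsetP sBS u uB); rewrite evu.
Qed.

Hypotheses (e_sym : symmetric e) (e_irr : irreflexive e).

Lemma maximal_independent_dominating (S : {set T}) :
  maximal_independent e S -> dominating e S.
Proof.
move=> /maxsetP[/independentP indS maxS]; apply/forallP => v.
have [//= | vNS] := boolP (v \in S).
have /independentP notInd : ~~ independent e (v |: S).
  apply: contraNN vNS => indvS.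
  by rewrite -(maxS _ indvS (subsetUr _ _)) setU11.
apply: contraT => /exists_inPn noNbr; case: notInd => u x.
rewrite !in_setU1 => /predU1P[-> | uS] /predU1P[-> | xS].
- by rewrite e_irr.
- exact: noNbr.
- by rewrite e_sym noNbr.
- exact: indS.
Qed.

Lemma maximal_independent_minimal_dominating (S : {set T}) :
  maximal_independent e S -> minimal_dominating e S.
Proof.
move=> maxS; apply: independent_dominating_minimal.
- by have /maxsetP[] := maxS.
- exact: maximal_independent_dominating.
Qed.

End IndependentDominating.

Theorem mainTheorem3 (R : realFieldType) (T : finType) (e : rel T)
  (w : T -> R) :
  simple_graph e -> w_well_dominated e w -> w_well_covered e w.
Proof.
move=> [e_sym e_irr] wwd S1 S2 maxS1 maxS2.
by apply: wwd; apply: maximal_independent_minimal_dominating.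
Qed.
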